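(* Let $(X, Y, f, g)$ be a min-max Stackelberg game satisfying the Standing Assumption below. Suppose the outer player plays a sequence of strategies $x^{(1)}, \dots, x^{(T)} \in X$, and suppose that after $T$ iterations the outer player's asymmetric regret is at most $\varepsilon$: $$\max_{x \in X}\left[\frac{1}{T}\sum_{t=1}^T V(x^{(t)}) - \frac{1}{T}\sum_{t=1}^T V(x)\right] \le \varepsilon .$$ Let $\bar{x}^{(T)} = \frac{1}{T}\sum_{t=1}^T x^{(t)}$ and let $y^*(\bar{x}^{(T)}) \in \arg\max_{y \in Y : g(\bar{x}^{(T)}, y) \ge 0} f(\bar{x}^{(T)}, y)$. Then $(\bar{x}^{(T)}, y^*(\bar{x}^{(T)}))$ is an $(\varepsilon, 0)$-Stackelberg equilibrium.
   Context: A min-max Stackelberg game $(X, Y, f, g)$ consists of non-empty compact convex sets $X \subset \mathbb{R}^n$, $Y \subset \mathbb{R}^m$, a continuous objective $f: X \times Y \to \mathbb{R}$, and continuous constraint functions $g = (g_1, \dots, g_K)$, $g_k : X \times Y \to \mathbb{R}$; the game is $\min_{x \in X} \max_{y \in Y : g(x,y) \ge 0} f(x,y)$ (inequalities componentwise). The outer player's value function is $V(x) = \max_{y \in Y : g(x,y) \ge 0} f(x,y)$. A strategy profile $(x^*, y^* ) \in X \times Y$ with $g(x^*, y^* ) \ge 0$ is an $(\epsilon, \delta)$-Stackelberg equilibrium if $\max_{y \in Y : g(x^*, y) \ge 0} f(x^*, y) - \delta \le f(x^*, y^* ) \le \min_{x \in X} \max_{y \in Y : g(x,y) \ge 0} f(x,y)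 + \epsilon$. Standing Assumption: (1) (Slater) for every $x \in X$ there is $\hat y \in Y$ with $g_k(x, \hat y) > 0$ for all $k$; (2) $\nabla_x f, \nabla_x g_1, \dots, \nabla_x g_K$ exist and are continuous; (3a) $f$ is continuous, convex in $x$ and concave in $y$; (3b) for each $k$, the map $(\mu, x, y) \mapsto \mu g_k(x,y)$ is continuous, convex in $(\mu, x)$ over $\mathbb{R}_+ \times X$ for every $y \in Y$, and concave in $y$ over $Y$ for every $(\mu, x) \in \mathbb{R}_+ \times X$. *)

From HB Require Import structures.
From mathcomp Require Import all_boot all_order all_algebra.
From mathcomp Require Import all_classical all_reals all_analysis.
Set Implicit Arguments. Unset Strict Implicit. Unset Printing Implicit Defensive.
Import Order.TTheory GRing.Theory Num.Theory.
Import numFieldNormedType.Exports.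
Local Open Scope classical_set_scope.
Local Open Scope ring_scope.

Definition cvx_set (R : realType) (n : nat) (A : set 'rV[R]_n) :=
  forall x y (t : R), A x -> A y -> 0 <= t -> t <= 1 -> A (t *: x + (1 - t) *: y).

Definition feas (R : realType) (n m K : nat) (Y : set 'rV[R]_m)
  (g : 'I_K -> 'rV[R]_n -> 'rV[R]_m -> R) (x : 'rV[R]_n) : set 'rV[R]_m :=
  [set y | Y y /\ forall k, 0 <= g k x y].

Definition valueV (R : realType) (n m K : nat) (Y : set 'rV[R]_m)
  (f : 'rV[R]_n -> 'rV[R]_m -> R) (g : 'I_K -> 'rV[R]_n -> 'rV[R]_m -> R)
  (x : 'rV[R]_n) : R :=
  sup [set f x y | y in feas Y g x].

Definition stackelberg_eq (R : realType) (n m K : nat) (X : set 'rV[R]_n)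
  (Y : set 'rV[R]_m) (f : 'rV[R]_n -> 'rV[R]_m -> R)
  (g : 'I_K -> 'rV[R]_n -> 'rV[R]_m -> R) (eps delta : R)
  (xs : 'rV[R]_n) (ys : 'rV[R]_m) : Prop :=
  [/\ X xs, Y ys, (forall k, 0 <= g k xs ys),
      valueV Y f g xs - delta <= f xs ys
    & f xs ys <= inf [set valueV Y f g x | x in X] + eps].

Definition dotv (R : realType) (n : nat) (u v : 'rV[R]_n) : R :=
  \sum_(i < n) u ord0 i * v ord0 i.

(* "grad_x h exists and is continuous on X x Y": h(., y) is differentiable at
   every x (for (x,y) in X x Y) with differential h' |-> <G x y, h'>, and the
   gradient map G is continuous on X x Y. *)
Definition grad_x_cont (R : realType) (n m : nat) (X : set 'rV[R]_n)
  (Y : set 'rV[R]_m) (h : 'rV[R]_n -> 'rV[R]_m -> R) : Prop :=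
  exists G : 'rV[R]_n -> 'rV[R]_m -> 'rV[R]_n,
    {within X `*` Y, continuous (fun p => G p.1 p.2)} /\
    forall x y, X x -> Y y ->
      differentiable (fun x' => h x' y) x /\
      forall v, 'd (fun x' => h x' y) x v = dotv (G x y) v.

Definition standing_assumption (R : realType) (n m K : nat) (X : set 'rV[R]_n)
  (Y : set 'rV[R]_m) (f : 'rV[R]_n -> 'rV[R]_m -> R)
  (g : 'I_K -> 'rV[R]_n -> 'rV[R]_m -> R) : Prop :=
  [/\
      (forall x, X x -> exists2 y, Y y & forall k, 0 < g k x y),
      grad_x_cont X Y f /\ (forall k, grad_x_cont X Y (g k)),
      [/\ {within X `*` Y, continuous (fun p => f p.1 p.2)},
          (forall y, Y y -> forall x1 x2 (t : R), X x1 -> X x2 -> 0 <= t -> t <= 1 ->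
             f (t *: x1 + (1 - t) *: x2) y <= t * f x1 y + (1 - t) * f x2 y) &
          (forall x, X x -> forall y1 y2 (t : R), Y y1 -> Y y2 -> 0 <= t -> t <= 1 ->
             t * f x y1 + (1 - t) * f x y2 <= f x (t *: y1 + (1 - t) *: y2))] &
      forall k,
      [/\ {within [set p : R * ('rV[R]_n * 'rV[R]_m) | 0 <= p.1 /\ X p.2.1 /\ Y p.2.2],
            continuous (fun p => p.1 * g k p.2.1 p.2.2)},
          (forall y, Y y -> forall (mu1 mu2 : R) x1 x2 (t : R), 0 <= mu1 -> 0 <= mu2 ->
             X x1 -> X x2 -> 0 <= t -> t <= 1 ->
             (t * mu1 + (1 - t) * mu2) * g k (t *: x1 + (1 - t) *: x2) y
               <= t * (mu1 * g k x1 y) + (1 - t) * (mu2 * g k x2 y)) &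
          (forall (mu : R) x, 0 <= mu -> X x -> forall y1 y2 (t : R), Y y1 -> Y y2 ->
             0 <= t -> t <= 1 ->
             t * (mu * g k x y1) + (1 - t) * (mu * g k x y2)
               <= mu * g k x (t *: y1 + (1 - t) *: y2))]].

(** Feasibility is inherited along averages: taking [mu] in {0, 1} in the joint
    convexity of [(mu, x) |-> mu g_k(x, y)] shows that [g_k(., y)] at a convex
    combination is at most its value at either end point, so a [y] feasible at
    the average strategy is feasible at every iterate. Jensen's inequality for
    the convex [f(., y)] then gives [f(xbar, y) <= 1/T sum_t V(x_t)], whence
    [V(xbar) <= 1/T sum_t V(x_t) <= V(x) + eps] for every [x] in [X]. The
    [delta = 0] half is the optimality of [y*] at [xbar]. *)
From HB Require Import structures.
From mathcomp Require Import all_boot all_order all_algebra.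
From mathcomp Require Import all_classical all_reals all_analysis.
From mathcomp Require Import ring.
Set Implicit Arguments. Unset Strict Implicit. Unset Printing Implicit Defensive.
Import Order.TTheory GRing.Theory Num.Theory.
Import numFieldNormedType.Exports.
Local Open Scope classical_set_scope.
Local Open Scope ring_scope.

Section Averages.
Variables (R : realType) (n : nat).

Definition avgv k (p : 'I_k -> 'rV[R]_n) : 'rV[R]_n := k%:R^-1 *: \sum_(i < k) p i.

Lemma avgv1 (p : 'I_1 -> 'rV[R]_n) : avgv p = p ord0.
Proof. by rewrite /avgv big_ord1 invr1 scale1r. Qed.

Lemma invSS_gt0 k : 0 < k.+2%:R^-1 :> R.
Proof. by rewrite invr_gt0 ltr0n. Qed.

Lemma invSS_lt1 k : k.+2%:R^-1 < 1 :> R.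
Proof. by rewrite invf_lt1 ?ltr0n // ltr1n. Qed.

Lemma invSS_step k : (1 - k.+2%:R^-1) / k.+1%:R = k.+2%:R^-1 :> R.
Proof.
have eSS : k.+2%:R = k.+1%:R + 1 :> R by rewrite -addn1 natrD.
have nz1 : k.+1%:R != 0 :> R by rewrite pnatr_eq0.
have nz2 : k.+1%:R + 1 != 0 :> R by rewrite -eSS pnatr_eq0.
by rewrite eSS; move: (k.+1%:R) nz1 nz2 => N nz1 nz2; field; rewrite nz1 nz2.
Qed.

Lemma avgvSr k (p : 'I_k.+2 -> 'rV[R]_n) :
  avgv p = k.+2%:R^-1 *: p ord_max
           + (1 - k.+2%:R^-1) *: avgv (fun i => p (widen_ord (leqnSn _) i)).
Proof.
by rewrite /avgv big_ord_recr /= scalerA scalerDr addrC invSS_step.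
Qed.

Variable A : set 'rV[R]_n.
Hypothesis A_cvx : cvx_set A.

Lemma avgv_mem k (p : 'I_k.+1 -> 'rV[R]_n) : (forall i, A (p i)) -> A (avgv p).
Proof.
elim: k p => [|k IH] p Ap; first by rewrite avgv1.
rewrite avgvSr; apply: A_cvx; [exact: Ap | exact: IH | |].
- exact: ltW (invSS_gt0 k).
- exact: ltW (invSS_lt1 k).
Qed.

Lemma jensen_avgv (phi : 'rV[R]_n -> R) :
  (forall x1 x2 (t : R), A x1 -> A x2 -> 0 <= t -> t <= 1 ->
     phi (t *: x1 + (1 - t) *: x2) <= t * phi x1 + (1 - t) * phi x2) ->
  forall k (p : 'I_k.+1 -> 'rV[R]_n), (forall i, A (p i)) ->
  phi (avgv p) <= k.+1%:R^-1 * \sum_(i < k.+1) phi (p i).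
Proof.
move=> phi_cvx; elim=> [|k IH] p Ap.
  by rewrite avgv1 big_ord1 invr1 mul1r.
set p' := fun i => p (widen_ord (leqnSn _) i).
have t_ge0 := ltW (invSS_gt0 k); have t_le1 := ltW (invSS_lt1 k).
rewrite avgvSr; apply: le_trans (phi_cvx _ _ _ (Ap _) (avgv_mem (p := p') (fun i => Ap _))
  t_ge0 t_le1) _.
rewrite big_ord_recr /= mulrDr addrC lerD //.
apply: le_trans (ler_wpM2l _ (IH p' (fun i => Ap _))) _; first by rewrite subr_ge0.
by rewrite mulrA invSS_step.
Qed.

Lemma avgv_le_each (psi : 'rV[R]_n -> R) :
  (forall x1 x2 (t : R), A x1 -> A x2 -> 0 < t -> t < 1 ->
     psi (t *: x1 + (1 - t) *: x2) <= psi x1 /\ psi (t *: x1 + (1 - t) *: x2) <= psi x2) ->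
  forall k (p : 'I_k.+1 -> 'rV[R]_n), (forall i, A (p i)) ->
  forall i, psi (avgv p) <= psi (p i).
Proof.
move=> psi_seg; elim=> [|k IH] p Ap i.
  by rewrite avgv1 (ord1 i).
set p' := fun i => p (widen_ord (leqnSn _) i).
have [le_max le_avg] := psi_seg _ _ _ (Ap ord_max) (avgv_mem (p := p') (fun i => Ap _))
  (invSS_gt0 k) (invSS_lt1 k).
rewrite avgvSr; case: (unliftP ord_max i) => [j ->|->] //.
apply: le_trans le_avg _; have := IH p' (fun i => Ap _) j.
by congr (_ <= psi (p _)); apply: val_inj; rewrite /= /bump leqNgt ltn_ord.
Qed.

End Averages.

Lemma perspective_convex_le_ends (R : realType) (n : nat) (A : set 'rV[R]_n)
    (phi : 'rV[R]_n -> R) :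
  (forall (mu1 mu2 : R) x1 x2 (t : R), 0 <= mu1 -> 0 <= mu2 -> A x1 -> A x2 ->
     0 <= t -> t <= 1 ->
     (t * mu1 + (1 - t) * mu2) * phi (t *: x1 + (1 - t) *: x2)
       <= t * (mu1 * phi x1) + (1 - t) * (mu2 * phi x2)) ->
  forall x1 x2 (t : R), A x1 -> A x2 -> 0 < t -> t < 1 ->
    phi (t *: x1 + (1 - t) *: x2) <= phi x1 /\ phi (t *: x1 + (1 - t) *: x2) <= phi x2.
Proof.
move=> persp x1 x2 t Ax1 Ax2 t_gt0 t_lt1.
have s_gt0 : 0 < 1 - t by rewrite subr_gt0.
split.
- have := persp 1 0 x1 x2 t ler01 (lexx 0) Ax1 Ax2 (ltW t_gt0) (ltW t_lt1).
  by rewrite mulr1 mulr0 addr0 !mul1r mul0r mulr0 addr0 ler_pM2l.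
- have := persp 0 1 x1 x2 t (lexx 0) ler01 Ax1 Ax2 (ltW t_gt0) (ltW t_lt1).
  by rewrite mulr1 mulr0 add0r !mul1r mul0r mulr0 add0r ler_pM2l.
Qed.

Section ValueFunction.
Variables (R : realType) (n m K : nat).
Variables (X : set 'rV[R]_n) (Y : set 'rV[R]_m).
Variables (f : 'rV[R]_n -> 'rV[R]_m -> R) (g : 'I_K -> 'rV[R]_n -> 'rV[R]_m -> R).

Lemma le_valueV x y :
  compact X -> compact Y -> {within X `*` Y, continuous (fun p => f p.1 p.2)} ->
  X x -> feas Y g x y -> f x y <= valueV Y f g x.
Proof.
move=> cX cY f_cont Xx [Yy gy]; apply: ub_le_sup; last by exists y.
have [|_ [M M_ub]] := compact_has_sup _ (continuous_compact f_cont (compact_setX cX cY)).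
  by exists (f x y), (x, y).
by exists M => _ [z [Yz _] <-]; apply: M_ub; exists (x, z).
Qed.

Lemma valueV_le_argmax x ys :
  feas Y g x ys -> (forall y, feas Y g x y -> f x y <= f x ys) ->
  valueV Y f g x <= f x ys.
Proof.
move=> feas_ys ys_max; apply: ge_sup; first by exists (f x ys), ys.
by move=> _ [y feas_y <-]; exact: ys_max.
Qed.

Hypothesis X_cvx : cvx_set X.
Hypothesis g_persp : forall k y, Y y ->
  forall (mu1 mu2 : R) x1 x2 (t : R), 0 <= mu1 -> 0 <= mu2 -> X x1 -> X x2 ->
  0 <= t -> t <= 1 ->
  (t * mu1 + (1 - t) * mu2) * g k (t *: x1 + (1 - t) *: x2) y
    <= t * (mu1 * g k x1 y) + (1 - t) * (mu2 * g k x2 y).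

Lemma feas_avgv k (xs : 'I_k.+1 -> 'rV[R]_n) y :
  (forall t, X (xs t)) -> feas Y g (avgv xs) y -> forall t, feas Y g (xs t) y.
Proof.
move=> Xxs [Yy gy] t; split=> // i; apply: le_trans (gy i) _.
exact: (avgv_le_each X_cvx (perspective_convex_le_ends (g_persp i Yy))).
Qed.

Hypotheses (X_compact : compact X) (Y_compact : compact Y).
Hypothesis f_cont : {within X `*` Y, continuous (fun p => f p.1 p.2)}.
Hypothesis f_cvx : forall y, Y y -> forall x1 x2 (t : R), X x1 -> X x2 ->
  0 <= t -> t <= 1 -> f (t *: x1 + (1 - t) *: x2) y <= t * f x1 y + (1 - t) * f x2 y.

Lemma feas_avgv_le_mean_valueV k (xs : 'I_k.+1 -> 'rV[R]_n) y :
  (forall t, X (xs t)) -> feas Y g (avgv xs) y ->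
  f (avgv xs) y <= k.+1%:R^-1 * \sum_(t < k.+1) valueV Y f g (xs t).
Proof.
move=> Xxs feas_y; have Yy := feas_y.1.
apply: le_trans (jensen_avgv X_cvx (f_cvx Yy) Xxs) _.
rewrite ler_wpM2l ?invr_ge0 ?ler0n //; apply: ler_sum => t _.
exact: le_valueV (feas_avgv Xxs feas_y t).
Qed.

End ValueFunction.

Theorem mainTheorem1 (R : realType) (n m K : nat)
  (X : set 'rV[R]_n) (Y : set 'rV[R]_m)
  (f : 'rV[R]_n -> 'rV[R]_m -> R) (g : 'I_K -> 'rV[R]_n -> 'rV[R]_m -> R)
  (hX0 : X !=set0) (hXc : compact X) (hXv : cvx_set X)
  (hY0 : Y !=set0) (hYc : compact Y) (hYv : cvx_set Y)
  (hg : forall k, {within X `*` Y, continuous (fun p => g k p.1 p.2)})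
  (hSA : standing_assumption X Y f g)
  (T : nat) (hT : (0 < T)%N) (xs : 'I_T -> 'rV[R]_n) (hxs : forall t, X (xs t))
  (eps : R)
  (hreg : forall x, X x ->
     T%:R^-1 * (\sum_(t < T) valueV Y f g (xs t)) - T%:R^-1 * (\sum_(t < T) valueV Y f g x)
       <= eps)
  (ystar : 'rV[R]_m)
  (hystar : feas Y g (T%:R^-1 *: \sum_(t < T) xs t) ystar /\
     forall y, feas Y g (T%:R^-1 *: \sum_(t < T) xs t) y ->
       f (T%:R^-1 *: \sum_(t < T) xs t) y <= f (T%:R^-1 *: \sum_(t < T) xs t) ystar) :
  stackelberg_eq X Y f g eps 0 (T%:R^-1 *: \sum_(t < T) xs t) ystar.
Proof.
case: T hT xs hxs hreg hystar => // T _ xs hxs hreg [feas_ys ys_max].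
rewrite -/(avgv xs) in feas_ys ys_max *.
case: hSA => _ _ [f_cont f_cvx _] g_cond.
have g_persp k := let: And3 _ persp _ := g_cond k in persp.
have f_avg_le := feas_avgv_le_mean_valueV hXv g_persp hXc hYc f_cont f_cvx hxs feas_ys.
split; [exact: avgv_mem | exact: feas_ys.1 | exact: feas_ys.2 | |].
  by rewrite subr0; exact: valueV_le_argmax feas_ys ys_max.
rewrite -lerBlDr; apply: lb_le_inf.
  by case: hX0 => x Xx; exists (valueV Y f g x), x.
move=> _ [x Xx <-]; have := hreg x Xx.
rewrite sumr_const card_ord -[valueV _ _ _ x *+ _]mulr_natr mulrCA mulVf ?pnatr_eq0 // mulr1.
rewrite lerBlDr => reg_x; rewrite lerBlDr [_ + eps]addrC.
exact: le_trans f_avg_le reg_x.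
Qed.
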